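(* Let $1\le i<s\le t$ and let $\mathcal H$ be an $s$-graph on $n$ vertices with $\Delta_i(\mathcal H)\le\Delta$. (a) If $\Delta$ is a nonnegative integer with $(s-i)$-cascade representation $\Delta=\sum_{k=0}^{\ell-1}\binom{n_{s-i-k}}{s-i-k}$, then \[k^t(\mathcal H)\le\binom{n}{i}\frac{1}{\binom{t}{i}}\sum_{k=0}^{\ell-1}\binom{n_{s-i-k}}{t-i-k}.\] (b) If $\Delta=\binom{x-i}{s-i}$ for some real $x\ge s$, then $k^t(\mathcal H)=0$ when $s\le x<t$, and when $x\ge t$, \[k^t(\mathcal H)\le\binom{n}{i}\frac{\binom{x-i}{t-i}}{\binom{t}{i}}=\binom{n}{i}\frac{\binom{x}{t}}{\binom{x}{i}}.\]
   Context: An $s$-graph on vertex set $V$ is a family of $s$-subsets of $V$. For $|I|=i$, $d_{\mathcal H}(I)$ is the number of edges containing $I$ and $\Delta_i(\mathcal H)=\max_{|I|=i}d_{\mathcal H}(I)$. For $t\ge s$, a $t$-clique is a $t$-set all of whose $s$-subsets are edges; $k^t(\mathcal H)$ is the number of $t$-cliques. A strict $q$-cascade is an integer sequence $n_q>n_{q-1}>\dots>n_{q-\ell+1}$ with $0\le\ell\le q$ and $n_{q-k}\ge q-k$ for all $k$; every integer $m\ge0$ can be written uniquely as $m=\sum_{k=0}^{\ell-1}\binom{n_{q-k}}{q-k}$ with a strict $q$-cascade (the $q$-cascade representation; $\ell=0$ for $m=0$). For real $x$, $\binom{x}{k}=x(x-1)\cdots(x-k+1)/k!$. *)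

From HB Require Import structures.
From mathcomp Require Import all_boot all_order all_algebra.
From mathcomp Require Import reals.
Set Implicit Arguments. Unset Strict Implicit. Unset Printing Implicit Defensive.
Import Order.TTheory GRing.Theory Num.Theory.

Section Hyper.
Variable V : finType.

Definition is_sgraph (s : nat) (H : {set {set V}}) : Prop :=
  forall e, e \in H -> #|e| = s.

Definition codeg (H : {set {set V}}) (I : {set V}) : nat :=
  #|[set e in H | I \subset e]|.

Definition is_clique (s t : nat) (H : {set {set V}}) (T : {set V}) : bool :=
  (#|T| == t) && [forall S : {set V}, ((S \subset T) && (#|S| == s)) ==> (S \in H)].

Definition kt (s t : nat) (H : {set {set V}}) : nat :=
  #|[set T : {set V} | is_clique s t H T]|.
End Hyper.

(* A strict q-cascade, encoded as the list ns = [n_q; n_{q-1}; ...; n_{q-l+1}],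
   i.e. ns`_k = n_{q-k}, with l = size ns. *)
Definition strict_cascade (q : nat) (ns : seq nat) : Prop :=
  [/\ size ns <= q,
      (forall k, k.+1 < size ns -> nth 0 ns k.+1 < nth 0 ns k)
    & (forall k, k < size ns -> q - k <= nth 0 ns k)]%N.

Definition cascade_rep (q m : nat) (ns : seq nat) : Prop :=
  strict_cascade q ns /\ m = (\sum_(k < size ns) 'C(nth 0 ns k, q - k))%N.

Definition binr {R : realType} (x : R) (k : nat) : R :=
  (\prod_(j < k) (x - j%:R)) / (k`!)%:R.

(* Double count the pairs [(I, T)] of an [i]-set [I] inside a [t]-clique [T]: then
   [T :\: I] is a [(t - i)]-clique of the link of [I], an [(s - i)]-graph with
   [codeg H I] edges.  So [k^t(H) 'C(t, i)] is at most ['C(n, i)] times the largest number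
   of [(t - i)]-cliques of an [(s - i)]-graph with few edges, and it remains to bound
   clique counts by edge counts, Kruskal-Katona style, both with cascade sums and with
   real binomials [binr x q].
   This goes by induction on the ground set.  Compressing towards a vertex [v] keeps the
   number of edges and does not decrease the number of cliques, so [G] may be assumed
   shifted.  Then the [r]-cliques of [G] are the [r]-cliques of the deletion [G - v] and
   the [(r - 1)]-cliques of [G - v] extended by [v], while every edge of [G - v] is a
   [q]-clique of the link of [v]; by induction this forces [G - v] to be small (the bound
   for [x - 1] instead of [x]), and Pascal's rule for the bound closes the induction. *)

From HB Require Import structures.
From mathcomp Require Import all_boot all_order all_algebra.
From mathcomp Require Import perm.
From mathcomp Require Import reals.
From mathcomp Require Import zify ring lra.
Set Implicit Arguments. Unset Strict Implicit. Unset Printing Implicit Defensive.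
Import Order.TTheory GRing.Theory Num.Theory.

Section Cliques.
Variable V : finType.
Implicit Types (A I S T U X : {set V}) (G : {set {set V}}).

Definition sgraph_on q X G := forall A, A \in G -> A \subset X /\ #|A| = q.

Lemma sgraph_on_setT q G : is_sgraph q G -> sgraph_on q [set: V] G.
Proof. by move=> sG A /sG; rewrite subsetT. Qed.

Lemma cliqueP q r G T :
  reflect (#|T| = r /\ forall S, S \subset T -> #|S| = q -> S \in G)
          (is_clique q r G T).
Proof.
apply: (iffP andP) => [[/eqP -> /forallP HT]|[-> HT]]; split => //.
- by move=> S ST Sq; have := HT S; rewrite ST Sq eqxx.
- by apply/forallP => S; apply/implyP => /andP[ST /eqP Sq]; apply: HT.
Qed.

Lemma exists_subset_card T k :
  k <= #|T| -> exists2 S : {set V}, S \subset T & #|S| = k.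
Proof.
move=> kT; have : 0 < #|[set S : {set V} | S \subset T & #|S| == k]|.
  by rewrite cards_draws bin_gt0.
by case/card_gt0P => S; rewrite inE => /andP[ST /eqP Sk]; exists S.
Qed.

Lemma clique_subset q r X G T : 0 < q <= r -> sgraph_on q X G ->
  is_clique q r G T -> T \subset X.
Proof.
case/andP=> q0 qr sG /cliqueP[Tr HT]; apply/subsetP => z zT.
have [S ST Sq] : exists2 S : {set V}, S \subset T :\ z & #|S| = q.-1.
  by apply: exists_subset_card; move: (cardsD1 z T); rewrite zT Tr; lia.
have zS : z \notin S by apply/negP => /(subsetP ST); rewrite !inE eqxx.
have /sG[/subsetP zSX _] : z |: S \in G.
  apply: HT; last by rewrite cardsU1 zS Sq; lia.
  by rewrite subUset sub1set zT (subset_trans ST) ?subsetDl.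
by apply: zSX; rewrite setU11.
Qed.

Lemma bin_le_card_of_clique q r G T : is_clique q r G T -> 'C(r, q) <= #|G|.
Proof.
case/cliqueP => <- HT; rewrite -cards_draws; apply: subset_leq_card.
by apply/subsetP => S; rewrite inE => /andP[ST /eqP Sq]; apply: HT.
Qed.

Lemma kt_eq0 q r G : #|G| < 'C(r, q) -> kt q r G = 0.
Proof.
move=> Gr; apply/eqP; rewrite cards_eq0; apply/eqP/setP => T; rewrite !inE.
by apply: contraTF Gr => /bin_le_card_of_clique; rewrite leqNgt.
Qed.

Lemma kt_eq0_on_set0 q r G : 0 < q <= r -> sgraph_on q set0 G -> kt q r G = 0.
Proof.
move=> qr sG; apply/eqP; rewrite cards_eq0; apply/eqP/setP => T; rewrite !inE.
apply/negP => cT; have := clique_subset qr sG cT; rewrite subset0 => /eqP T0.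
by case/cliqueP: cT; rewrite T0 cards0 => r0 _; rewrite -r0 in qr; lia.
Qed.

Lemma kt_diag q X G : sgraph_on q X G -> kt q q G = #|G|.
Proof.
move=> sG; apply: eq_card => T; rewrite inE.
apply/cliqueP/idP => [[Tq HT]|TG]; first exact: HT.
have [_ Tq] := sG _ TG; split => // S ST Sq.
suff -> : S = T by [].
by apply/eqP; rewrite eqEcard ST Sq Tq leqnn.
Qed.

Lemma kt1 r X G : sgraph_on 1 X G -> kt 1 r G = 'C(#|G|, r).
Proof.
move=> sG; set W := [set v | [set v] \in G].
have -> : G = [set [set v] | v in W].
  apply/setP => A; apply/idP/imsetP => [AG|[v vW ->]]; last by rewrite inE in vW.
  have [_ /eqP/cards1P[v Av]] := sG _ AG; subst A.
  by exists v; rewrite ?inE.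
rewrite card_imset; last exact: set1_inj.
rewrite -cards_draws; apply: eq_card => T; rewrite !inE.
apply/cliqueP/andP => [[Tr HT]|[TW /eqP Tr]]; split; rewrite ?Tr //.
- apply/subsetP => v vT.
  have /imsetP[w wW /set1_inj->] // : [set v] \in [set [set w] | w in W].
    by apply: HT; rewrite ?sub1set ?cards1.
- move=> S ST /eqP/cards1P[v Sv]; subst S; apply: imset_f.
  by apply: (subsetP TW); rewrite -sub1set.
Qed.

Definition link G I := [set A :\: I | A in [set A in G | I \subset A]].

Lemma card_link G I : #|link G I| = codeg G I.
Proof.
apply: card_in_imset => A B; rewrite !inE => /andP[_ IA] /andP[_ IB] AB.
by rewrite -(setID A I) -(setID B I) (setIidPr IA) (setIidPr IB) AB.
Qed.

Lemma sgraph_on_link q X G I :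
  sgraph_on q X G -> sgraph_on (q - #|I|) (X :\: I) (link G I).
Proof.
move=> sG B /imsetP[A]; rewrite inE => /andP[/sG[AX Aq] IA] ->.
by rewrite setSD // cardsD (setIidPr IA) Aq.
Qed.

Lemma link_clique q r G I T : is_clique q r G T -> I \subset T -> #|I| <= q ->
  is_clique (q - #|I|) (r - #|I|) (link G I) (T :\: I).
Proof.
case/cliqueP => Tr HT IT Iq; apply/cliqueP; split.
  by rewrite cardsD (setIidPr IT) Tr.
move=> S; rewrite subsetD => /andP[ST dSI] Sq; apply/imsetP; exists (S :|: I).
  rewrite inE subsetUr andbT; apply: HT; first by rewrite subUset ST.
  by rewrite cardsU (disjoint_setI0 dSI) cards0 subn0 Sq subnK.
by rewrite setDUl setDv setU0; exact/esym/setDidPl.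
Qed.

End Cliques.

Section Deletion.
Variables (V : finType) (v : V).
Implicit Types (A S T U X : {set V}) (G : {set {set V}}).

Definition deletion G := [set A in G | v \notin A].

Definition shifted G :=
  forall A z, A \in G -> v \notin A -> z \in A -> v |: (A :\ z) \in G.

Lemma card_deletion_link G : #|deletion G| + #|link G [set v]| = #|G|.
Proof.
rewrite card_link -(cardsID [set A : {set V} | v \in A] G) addnC; congr (_ + _).
  by apply: eq_card => A; rewrite !inE sub1set.
by apply: eq_card => A; rewrite !inE andbC.
Qed.

Lemma sgraph_on_deletion q X G : sgraph_on q X G -> sgraph_on q (X :\ v) (deletion G).
Proof.
by move=> sG A; rewrite inE => /andP[/sG[AX Aq] vA]; rewrite subsetD1 AX vA.
Qed.

Lemma sgraph_on_link1 q X G : sgraph_on q X G -> sgraph_on q.-1 (X :\ v) (link G [set v]).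
Proof. by move/(sgraph_on_link (I := [set v])); rewrite cards1 subn1. Qed.

Lemma clique_deletion q r G T : v \notin T ->
  is_clique q r (deletion G) T = is_clique q r G T.
Proof.
move=> vT; apply/cliqueP/cliqueP => -[Tr HT]; split => // S ST Sq.
  by have := HT S ST Sq; rewrite inE => /andP[].
by rewrite inE HT //=; apply: contra vT; apply: (subsetP ST).
Qed.

Section Shifted.
Variables (q : nat) (X : {set V}) (G : {set {set V}}).
Hypotheses (q0 : 0 < q) (sG : sgraph_on q X G) (shG : shifted G).

(* Each edge [A] avoiding [v] is a [q]-clique of the link of [v]:
   for [z \in A], shifting [z] to [v] gives the edge [v |: (A :\ z)]. *)
Lemma card_deletion_le_kt_link : #|deletion G| <= kt q.-1 q (link G [set v]).
Proof.
apply: subset_leq_card; apply/subsetP => A; rewrite !inE => /andP[AG vA].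
have [_ Aq] := sG AG; apply/cliqueP; split => // S SA Sq.
have [z] : exists z, z \in A :\: S.
  by apply/set0Pn; rewrite -card_gt0 cardsD (setIidPr SA) Aq Sq; lia.
rewrite inE => /andP[zS zA].
have -> : S = A :\ z.
  apply/eqP; rewrite eqEcard subsetD1 SA zS /=.
  by move: (cardsD1 z A); rewrite zA Aq Sq; lia.
apply/imsetP; exists (v |: (A :\ z)); first by rewrite inE shG // sub1set setU11.
rewrite setDUl setDv set0U; apply/esym/setDidPl.
by rewrite disjoint_sym disjoints1 !inE (negbTE vA) andbF.
Qed.

Lemma notin_clique_deletion r T : q <= r -> is_clique q r (deletion G) T -> v \notin T.
Proof.
move=> qr /(clique_subset _ (sgraph_on_deletion sG)); rewrite q0 qr => /(_ isT).
by rewrite subsetD1 => /andP[].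
Qed.

Lemma clique_setU1 r S : q < r -> v \notin S ->
  is_clique q r G (v |: S) = is_clique q r.-1 (deletion G) S.
Proof.
move=> qr vS; have Sv : #|v |: S| = #|S|.+1 by rewrite cardsU1 vS.
apply/cliqueP/cliqueP => -[Sr HS]; split; first by rewrite Sv in Sr; lia.
- move=> U US Uq; rewrite inE HS ?(subset_trans US) ?subsetU1 //=.
  by apply: contra vS; apply: (subsetP US).
- by rewrite Sv Sr; lia.
move=> U; case: (boolP (v \in U)) => vU US Uq; last first.
  have : U \in deletion G by apply: HS; rewrite // -(setU1K vS) subsetD1 US.
  by rewrite inE => /andP[].
set W := U :\ v.
have WS : W \subset S by rewrite -(setU1K vS) setSD.
have Wq : #|W| = q.-1 by move: (cardsD1 v U); rewrite vU Uq add1n -/W; lia.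
have [z] : exists z, z \in S :\: W.
  by apply/set0Pn; rewrite -card_gt0 cardsD (setIidPr WS) Sr Wq; lia.
rewrite inE => /andP[zW zS].
have : z |: W \in deletion G.
  by apply: HS; rewrite ?subUset ?sub1set ?zS // cardsU1 zW Wq; lia.
rewrite inE => /andP[zWG vzW].
by have := shG zWG vzW (setU11 z W); rewrite setU1K // setD1K.
Qed.

Lemma kt_shifted r : q < r -> kt q r G = kt q r (deletion G) + kt q r.-1 (deletion G).
Proof.
move=> qr; rewrite /kt -(cardsID [set T : {set V} | v \in T]) addnC; congr (_ + _).
  apply: eq_card => T; rewrite !inE; case: (boolP (v \in T)) => vT /=.
    by apply/esym/negP => /(notin_clique_deletion (ltnW qr)); rewrite vT.
  by rewrite clique_deletion.
have avoid S : S \in [set S | is_clique q r.-1 (deletion G) S] -> v \notin S.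
  by rewrite inE; apply: notin_clique_deletion; lia.
rewrite -[RHS](card_in_imset (f := fun S => v |: S)); last first.
  by move=> S1 S2 /avoid v1 /avoid v2 E; rewrite -(setU1K v1) E setU1K.
apply: eq_card => T; rewrite !inE; apply/andP/imsetP => [[cT vT]|[S SK ->]].
  by exists (T :\ v); rewrite ?setD1K // inE -clique_setU1 ?setD1K ?setD11.
have vS := avoid S SK; rewrite inE in SK.
by rewrite clique_setU1 // setU11.
Qed.
End Shifted.
End Deletion.

Section Compression.
Variables (V : finType) (v y : V).
Implicit Types (A B T U X : {set V}) (G : {set {set V}}).

(* [compress G] replaces each edge [A] with [y \in A] and [v \notin A] by
   [v |: (A :\ y)], unless the latter is already an edge. *)
Definition swap A := tperm v y @^-1: A.
Definition movable A := (y \in A) && (v \notin A).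
Definition compress_set A := if movable A then swap A else A.
Definition compress G := [set A | if A \in G then compress_set A \in G
                                  else movable (swap A) && (swap A \in G)].

Lemma swapK : involutive swap.
Proof. by move=> A; apply/setP => z; rewrite !inE tpermK. Qed.

Lemma card_swap A : #|swap A| = #|A|.
Proof. exact/card_preimset/perm_inj. Qed.

Lemma swap_id A : (v \in A) = (y \in A) -> swap A = A.
Proof.
by move=> vyA; apply/setP => z; rewrite inE; case: tpermP => [->|->|]; rewrite ?vyA.
Qed.

Lemma movable_swap A : movable (swap A) = (v \in A) && (y \notin A).
Proof. by rewrite /movable !inE tpermL tpermR. Qed.

Lemma swap_movable A : movable A -> swap A = v |: (A :\ y).
Proof.
case/andP => yA vA; apply/setP => z; rewrite !inE.
case: (tpermP v y z) => [->|->|/eqP zv /eqP zy]; rewrite ?eqxx ?yA ?(negbTE vA) //.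
  by rewrite /= orbF; apply/esym/eqP => yv; rewrite -yv yA in vA.
by rewrite (negbTE zv) zy.
Qed.

Lemma movable_of_compress_set G A : A \in G -> compress_set A \notin G -> movable A.
Proof. by rewrite /compress_set; case: ifP => // _ ->. Qed.

Lemma card_compress G : #|compress G| = #|G|.
Proof.
set P := [set A | compress_set A \in G].
rewrite -(cardsID G (compress G)) -(cardsID P G); congr (_ + _).
  by apply: eq_card => A; rewrite !inE; case: (A \in G); rewrite ?andbT ?andbF.
rewrite -(card_imset _ (can_inj swapK)); apply: eq_card => A; rewrite !inE.
apply/andP/imsetP => [[/negbTE AG]|[B]].
  rewrite AG => /andP[mA sAG]; exists (swap A); last by rewrite swapK.
  by rewrite !inE sAG /compress_set mA swapK AG.
rewrite !inE => /andP[cB BG] ->; have mB := movable_of_compress_set BG cB.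
by rewrite /compress_set mB in cB; rewrite (negbTE cB) swapK mB BG.
Qed.

Lemma sgraph_on_compress q X G : v \in X -> sgraph_on q X G -> sgraph_on q X (compress G).
Proof.
move=> vX sG A; rewrite inE; case: ifP => [AG _|_ /andP[]]; first exact: sG.
rewrite movable_swap => /andP[vA yA] /sG[sAX sAq]; rewrite -card_swap sAq; split=> //.
apply/subsetP => z zA; have [-> //|zv] := eqVneq z v.
have zy : z != y by apply: contraNneq yA => <-.
by apply: (subsetP sAX); rewrite inE tpermD // eq_sym.
Qed.

Lemma deletion_compress G : deletion v (compress G) \subset deletion v G.
Proof.
apply/subsetP => A; rewrite !inE => /andP[+ vA]; rewrite vA andbT.
by case: ifP => // _; rewrite movable_swap (negbTE vA).
Qed.

Lemma clique_compress_stay q r G T : is_clique q r G T ->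
  is_clique q r G (compress_set T) -> is_clique q r (compress G) T.
Proof.
move=> /cliqueP[Tr HT] /cliqueP[_ HcT]; apply/cliqueP; split => // U UT Uq.
have UG := HT U UT Uq; rewrite inE UG /compress_set; case: ifP => // /andP[yU vU].
have yT : y \in T by apply: (subsetP UT).
move: HcT; rewrite /compress_set; case: ifP => [_ HsT|/negbT].
  by apply: HsT; rewrite ?card_swap // preimsetS.
rewrite negb_and yT negbK /= => vT _; apply: HT; last by rewrite card_swap.
have sT : swap T = T by rewrite swap_id // vT yT.
by rewrite -sT preimsetS.
Qed.

Lemma clique_compress_move q r G B : movable B -> is_clique q r G B ->
  is_clique q r (compress G) (swap B).
Proof.
move=> mB /cliqueP[Br HB]; apply/cliqueP; rewrite card_swap; split => // U UsB Uq.
have /andP[_ ysB] : (v \in swap B) && (y \notin swap B) by rewrite -movable_swap swapK.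
have yU : y \notin U by apply: contra ysB; apply: (subsetP UsB).
have sUG : swap U \in G by apply: HB; rewrite ?card_swap // -[B]swapK preimsetS.
rewrite inE; case: ifP => UG.
  by rewrite /compress_set /movable (negbTE yU).
rewrite movable_swap yU sUG !andbT; apply: contraFT UG => vU.
by rewrite -[U]swap_id // (negbTE vU) (negbTE yU).
Qed.

Lemma kt_compress q r G : kt q r G <= kt q r (compress G).
Proof.
rewrite /kt -card_compress; apply: subset_leq_card; apply/subsetP => T; rewrite !inE.
case: ifP => [cT|_ /andP[msT]]; first exact: clique_compress_stay.
by rewrite -{2}(swapK T); apply: clique_compress_move.
Qed.
End Compression.

Lemma exists_shifted (V : finType) (v : V) q r (X : {set V}) (G : {set {set V}}) :
  v \in X -> sgraph_on q X G ->
  exists2 G', sgraph_on q X G' /\ #|G'| = #|G| & kt q r G <= kt q r G' /\ shifted v G'.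
Proof.
move=> vX sG.
pose ok (G' : {set {set V}}) :=
  [&& [forall A in G', (A \subset X) && (#|A| == q)], #|G'| == #|G| & kt q r G <= kt q r G'].
have okP (G' : {set {set V}}) :
    ok G' -> sgraph_on q X G' /\ #|G'| = #|G| /\ kt q r G <= kt q r G'.
  by case/and3P=> /forall_inP sG' /eqP -> ->; split=> // A /sG' /andP[-> /eqP].
have okG : ok G.
  by rewrite /ok eqxx leqnn !andbT; apply/forall_inP => A /sG[-> ->]; rewrite eqxx.
have [G' okG' minG'] := @arg_minnP _ G ok (fun G' => #|deletion v G'|) okG.
have [sG' [cG' kG']] := okP G' okG'; exists G' => //; split => // A z AG' vA zA.
(* [G'] minimises [#|deletion v G'|]; compressing [z] towards [v] would lower it. *)
have okC : ok (compress v z G').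
  have sC := sgraph_on_compress (y := z) vX sG'.
  rewrite /ok card_compress cG' eqxx (leq_trans kG' (kt_compress _ _ _ _ _)) !andbT.
  by apply/forall_inP => B /sC[-> ->]; rewrite eqxx.
apply: contraT => nG; suff : #|deletion v (compress v z G')| < #|deletion v G'|.
  by rewrite ltnNge minG'.
apply: proper_card; rewrite properE deletion_compress; apply/subsetPn; exists A.
  by rewrite inE AG' vA.
have mA : movable v z A by rewrite /movable zA vA.
by rewrite !inE vA andbT AG' /compress_set mA swap_movable.
Qed.

Section CliqueBound.
Local Open Scope ring_scope.
Variables (R : realDomainType) (V : finType) (P : Type).
Variables (bound : P -> nat -> nat -> R) (prev : P -> P) (admissible : P -> nat -> bool).
Implicit Types (X : {set V}) (G : {set {set V}}).

(* [bound p q r] bounds the number of [r]-cliques of a [q]-graph with at most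
   [bound p q q] edges, for the [r] with [admissible p r]; the deletion and the link of a
   vertex get the parameter [prev p].  [bound_split] is Pascal's rule in the form the
   induction uses (for cascades it holds only up to [+ 1], which integrality absorbs), and
   [bound_lt_bin] covers the [r] for which [prev p] is no longer admissible. *)
Hypothesis bound_ge0 : forall p q r, admissible p r -> 0 <= bound p q r.
Hypothesis bin_le_bound1 : forall p r m,
  admissible p r -> m%:R <= bound p 1 1 -> 'C(m, r)%:R <= bound p 1 r.
Hypothesis bound_split : forall p q m0 m1, (1 < q)%N ->
  (m0 + m1)%:R <= bound p q q -> bound (prev p) q q < m0%:R ->
  m1%:R <= bound (prev p) q.-1 q.-1.
Hypothesis bound_pred_le : forall p q, (1 < q)%N -> bound p q.-1 q <= bound p q q.
Hypothesis bound_pascal : forall p q r, (q < r)%N -> admissible p r ->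
  bound (prev p) q r + bound (prev p) q r.-1 <= bound p q r.
Hypothesis admissible_le : forall p r m, (m <= r)%N -> admissible p r -> admissible p m.
Hypothesis bound_lt_bin : forall p q r, (0 < q < r)%N -> admissible p r ->
  ~~ admissible (prev p) r -> bound p q q < 'C(r, q)%:R.

Definition clique_bounded X := forall q r p G, (0 < q <= r)%N -> sgraph_on q X G ->
  admissible p r -> #|G|%:R <= bound p q q -> (kt q r G)%:R <= bound p q r.

Section Step.
Variables (v : V) (X : {set V}) (q : nat) (p : P) (G : {set {set V}}).
Hypotheses (IH : clique_bounded (X :\ v)) (q1 : (1 < q)%N).
Hypotheses (sG : sgraph_on q X G) (shG : shifted v G) (Gp : #|G|%:R <= bound p q q).

(* If the deletion were too large, the link would be small, hence by induction
   would have few [q]-cliques; but every edge of the deletion is such a clique. *)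
Lemma card_deletion_le_bound : admissible (prev p) q ->
  #|deletion v G|%:R <= bound (prev p) q q.
Proof.
move=> adm; rewrite leNgt; apply/negP => big.
have link_small : #|link G [set v]|%:R <= bound (prev p) q.-1 q.-1.
  by apply: bound_split big; rewrite // card_deletion_link.
have kt_link : (kt q.-1 q (link G [set v]))%:R <= bound (prev p) q.-1 q.
  by apply: IH (sgraph_on_link1 (v := v) sG) adm link_small; lia.
suff : #|deletion v G|%:R <= bound (prev p) q q by rewrite leNgt big.
apply: le_trans (bound_pred_le _ q1); apply: le_trans kt_link.
by rewrite ler_nat (card_deletion_le_kt_link _ sG) // ltnW.
Qed.

Lemma kt_le_bound_shifted r : (q < r)%N -> admissible p r -> admissible (prev p) r ->
  (kt q r G)%:R <= bound p q r.
Proof.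
move=> qr adm adm'; rewrite (kt_shifted (ltnW q1) sG shG qr) natrD.
have sD := sgraph_on_deletion (v := v) sG.
have Dp := card_deletion_le_bound (admissible_le (ltnW qr) adm').
apply: le_trans (bound_pascal qr adm); apply: lerD; apply: IH sD _ Dp => //; try lia.
by apply: admissible_le adm'; rewrite leq_pred.
Qed.
End Step.

Theorem kt_le_bound X : clique_bounded X.
Proof.
have [n] := ubnP #|X|; elim: n X => // n IH X /ltnSE Xn q r p G /andP[q0 qr] sG adm Gp.
have [X0|[v vX]] := set_0Vmem X.
  by rewrite X0 in sG; rewrite kt_eq0_on_set0 ?q0 ?qr ?bound_ge0.
have [rq|] := eqVneq r q; first by rewrite rq (kt_diag sG).
rewrite neq_ltn ltnNge qr /= => {}qr.
have [q1|] := eqVneq q 1; first by rewrite q1 in sG Gp *; rewrite (kt1 r sG) bin_le_bound1.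
rewrite neq_ltn ltnNge q0 /= => {}q1.
have [adm'|nadm] := boolP (admissible (prev p) r); last first.
  by rewrite kt_eq0 ?bound_ge0 // -(ltr_nat R) (le_lt_trans Gp) ?bound_lt_bin ?q0.
have [G' [sG' cG'] [kG' shG']] := exists_shifted r vX sG.
apply: le_trans (_ : (kt q r G')%:R <= _); first by rewrite ler_nat.
have IHv : clique_bounded (X :\ v).
  by apply: IH; move: Xn; rewrite (cardsD1 v X) vX.
by apply: (kt_le_bound_shifted IHv) qr adm adm'; rewrite ?cG'.
Qed.
End CliqueBound.

Lemma bin_le_pascal a e : 0 < e -> 'C(a, e) <= 'C(a.-1, e) + 'C(a.-1, e.-1).
Proof. by case: a => [|a]; case: e => // e _; rewrite ?bin0n //= binS. Qed.

Lemma pascal_le_bin a e : 1 < e -> 'C(a.-1, e) + 'C(a.-1, e.-1) <= 'C(a, e).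
Proof. by case: e => [|[|e]] // _; case: a => [|a]; rewrite ?binS ?bin0n. Qed.

Lemma leq_sum_ord m n (F : nat -> nat) : m <= n -> \sum_(k < m) F k <= \sum_(k < n) F k.
Proof.
by move=> mn; rewrite (big_ord_widen n F mn) big_mkcond leq_sum // => k _; case: ifP.
Qed.

Section Cascade.
Variable a : nat -> nat.
Let a' k := (a k).-1.

Lemma cascade_pascal_le q : 0 < q ->
  \sum_(k < q) 'C(a k, q - k) <=
  \sum_(k < q) 'C(a' k, q - k) + \sum_(k < q.-1) 'C(a' k, q.-1 - k) + 1.
Proof.
case: q => // q _; rewrite -addnA /=.
have -> : \sum_(k < q) 'C(a' k, q - k) + 1 = \sum_(k < q.+1) 'C(a' k, q - k).
  by rewrite big_ord_recr subnn bin0.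
rewrite -big_split; apply: leq_sum => k _ /=.
have -> : q - k = (q.+1 - k).-1 by lia.
by rewrite bin_le_pascal // subn_gt0.
Qed.

Lemma pascal_le_cascade q r : q < r ->
  \sum_(k < q) 'C(a' k, r - k) + \sum_(k < q) 'C(a' k, r.-1 - k) <=
  \sum_(k < q) 'C(a k, r - k).
Proof.
move=> qr; rewrite -big_split /=; apply: leq_sum => k _.
have -> : r.-1 - k = (r - k).-1 by lia.
by rewrite pascal_le_bin //; have := ltn_ord k; lia.
Qed.
End Cascade.

Theorem kt_le_cascade (V : finType) (X : {set V}) q r (a : nat -> nat) G :
  0 < q <= r -> sgraph_on q X G -> #|G| <= \sum_(k < q) 'C(a k, q - k) ->
  kt q r G <= \sum_(k < q) 'C(a k, r - k).
Proof.
move=> qr sG Ga; rewrite -(ler_nat int).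
apply: (kt_le_bound (R := int) (P := nat -> nat)
  (bound := fun a q r => ((\sum_(k < q) 'C(a k, r - k))%:R : int)%R)
  (prev := fun a k => (a k).-1) (admissible := fun _ _ => true)) qr sG _ _ => //;
  rewrite ?ler_nat //.
- by move=> b r' m _; rewrite !ler_nat !big_ord1 !subn0 bin1; apply: leq_bin2l.
- move=> b q' m0 m1 q1; rewrite !ler_nat ltr_nat => Gb big.
  by have := cascade_pascal_le b (ltnW q1); lia.
- move=> b q' q1; rewrite ler_nat.
  by apply: (leq_sum_ord (fun k => 'C(b k, q' - k))); rewrite leq_pred.
- by move=> b q' r' qr' _; rewrite -natrD ler_nat pascal_le_cascade.
Qed.

Section RealBinomial.
Local Open Scope ring_scope.
Variable R : realType.
Implicit Types (x y : R).

Definition ffactr x k := \prod_(j < k) (x - j%:R).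

Lemma binrE x k : binr x k = ffactr x k / k`!%:R.
Proof. by []. Qed.

Lemma natr_fact_neq0 k : k`!%:R != 0 :> R.
Proof. by rewrite pnatr_eq0 -lt0n fact_gt0. Qed.

Lemma ffactr_nat m k : ffactr m%:R k = (m ^_ k)%:R.
Proof.
elim: k => [|k IH]; first by rewrite /ffactr big_ord0 ffactn0.
rewrite /ffactr big_ord_recr /= -/(ffactr _ _) IH ffactnSr.
case: (leqP k m) => km; first by rewrite natrM natrB.
by rewrite ffact_small // !mul0r.
Qed.

Lemma binr_nat m k : binr m%:R k = 'C(m, k)%:R :> R.
Proof. by rewrite binrE ffactr_nat -bin_ffact natrM mulfK ?natr_fact_neq0. Qed.

Lemma ffactrS x k : ffactr x k.+1 = x * ffactr (x - 1) k.
Proof.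
rewrite /ffactr big_ord_recl /= subr0; congr (_ * _); apply: eq_bigr => j _.
by rewrite /bump /= add1n -addn1 natrD; ring.
Qed.

Lemma ffactr_add x i k : ffactr x (i + k) = ffactr x i * ffactr (x - i%:R) k.
Proof.
elim: k => [|k IH]; first by rewrite addn0 /ffactr big_ord0 mulr1.
by rewrite addnS /ffactr !big_ord_recr /= -!/(ffactr _ _) IH natrD; ring.
Qed.

Lemma binr1 x : binr x 1 = x.
Proof. by rewrite binrE /ffactr big_ord1 subr0 divr1. Qed.

Lemma binr_pascal x k : (0 < k)%N -> binr x k = binr (x - 1) k + binr (x - 1) k.-1.
Proof.
case: k => // k _; rewrite !binrE ffactrS /ffactr big_ord_recr -/(ffactr _ _) /= factS natrM.
have f0 := natr_fact_neq0 k; have k0 : k.+1%:R != 0 :> R by rewrite pnatr_eq0.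
by field; rewrite f0 addrC natr1 k0.
Qed.

Lemma ffactr_factor_ge0 x k (j : 'I_k) : (k.-1)%:R <= x -> 0 <= x - j%:R.
Proof.
move=> kx; rewrite subr_ge0 (le_trans _ kx) // ler_nat.
by case: k j {kx} => [[]|k] //= j; rewrite -ltnS.
Qed.

Lemma binr_ge0 x k : (k.-1)%:R <= x -> 0 <= binr x k.
Proof.
by move=> kx; rewrite binrE divr_ge0 // prodr_ge0 // => j _; apply: ffactr_factor_ge0.
Qed.

Lemma binr_le x y k : (k.-1)%:R <= x -> x <= y -> binr x k <= binr y k.
Proof.
move=> kx xy; rewrite !binrE ler_wpM2r ?invr_ge0 //.
by apply: ler_prod => j _; rewrite ffactr_factor_ge0 // lerD2r.
Qed.

Lemma binr_lt x y k : (0 < k)%N -> (k.-1)%:R <= x -> x < y -> binr x k < binr y k.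
Proof.
move=> k0 kx xy; rewrite !binrE ltr_pM2r ?invr_gt0 ?ltr0n ?fact_gt0 //.
apply: ltr_prod => [|j _]; last by rewrite ffactr_factor_ge0 // ltrD2r.
by case: k k0 {kx} => // k _; apply/hasP; exists ord0; rewrite ?mem_index_enum.
Qed.

Lemma ffactr_gt0 x k : (k.-1)%:R < x -> 0 < ffactr x k.
Proof.
move=> kx; apply: prodr_gt0 => j _; rewrite subr_gt0 (le_lt_trans _ kx) // ler_nat.
by case: k j {kx} => [[]|k] //= j; rewrite -ltnS.
Qed.

Lemma bin_le_binr m x r : m%:R <= x -> (r.-1)%:R <= x -> 'C(m, r)%:R <= binr x r.
Proof.
move=> mx rx; have [mr|rm] := ltnP m r; first by rewrite bin_small ?binr_ge0.
by rewrite -binr_nat binr_le // ler_nat (leq_trans (leq_pred r)).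
Qed.

Lemma binr_lt_bin x q r : (0 < q)%N -> (q.-1)%:R <= x -> x < r%:R ->
  binr x q < 'C(r, q)%:R.
Proof. by move=> q0 qx xr; rewrite -binr_nat binr_lt. Qed.

Lemma binr_ratio x i t : (i <= t)%N -> ffactr x i != 0 ->
  binr (x - i%:R) (t - i) / 'C(t, i)%:R = binr x t / binr x i.
Proof.
move=> it fx; move: (t - i)%N (subnKC it) => k <-.
have hC := bin_fact (leq_addr k i); rewrite addKn in hC.
have -> : 'C(i + k, i)%:R = (i + k)`!%:R / (i`!%:R * k`!%:R) :> R.
  by rewrite -hC !natrM mulfK // mulf_neq0 // natr_fact_neq0.
rewrite !binrE ffactr_add.
have f1 := natr_fact_neq0 i; have f2 := natr_fact_neq0 k.
have f3 := natr_fact_neq0 (i + k).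
by field; rewrite f1 f2 f3 fx.
Qed.
End RealBinomial.

Theorem kt_le_binr (R : realType) (V : finType) (X : {set V}) q r (x : R) G :
  (0 < q <= r)%N -> sgraph_on q X G -> ((r.-1)%:R <= x)%R -> (#|G|%:R <= binr x q)%R ->
  ((kt q r G)%:R <= binr x r)%R.
Proof.
move=> qr sG rx Gx.
apply: (kt_le_bound (P := R) (bound := fun x _ r => binr x r) (prev := fun x => (x - 1)%R)
  (admissible := fun x r => ((r.-1)%:R <= x)%R)) qr sG rx Gx.
- by move=> y q' r'; apply: binr_ge0.
- by move=> y r' m ry; rewrite binr1 => my; apply: bin_le_binr.
- by move=> y q' m0 m1 q1; rewrite (binr_pascal _ (ltnW q1)) natrD; lra.
- by [].
- by move=> y q' r' qr' _; rewrite -binr_pascal //; lia.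
- by move=> y r' m mr; apply: le_trans; rewrite ler_nat -!subn1 leq_sub2r.
move=> y q' r' /andP[q0 qr'] ry; rewrite -ltNge => yr.
have r0 : (0 < r')%N by lia.
apply: binr_lt_bin => //; last by move: yr; rewrite -subn1 natrB //; lra.
by apply: le_trans _ ry; rewrite ler_nat -!subn1 leq_sub2r // ltnW.
Qed.

(* Each [t]-clique [T] of [H] contains ['C(t, i)] sets [I] of size [i],
   and [T :\: I] is then a clique of the link of [I]. *)
Lemma kt_mul_bin_le_sum_link (V : finType) s t i (H : {set {set V}}) : i <= s ->
  kt s t H * 'C(t, i) <=
  \sum_(I in [set I : {set V} | #|I| == i]) kt (s - i) (t - i) (link H I).
Proof.
move=> iS; set K := [set T | is_clique s t H T].
have -> : kt s t H * 'C(t, i) =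
    \sum_(T in K) \sum_(I in [set I : {set V} | #|I| == i]) (I \subset T).
  rewrite -sum_nat_const; apply: eq_bigr => T; rewrite inE => /cliqueP[<- _].
  rewrite -cards_draws -sum1_card big_mkcond [RHS]big_mkcond; apply: eq_bigr => I _.
  by rewrite !inE; case: (I \subset T); case: (_ == _).
rewrite exchange_big /=; apply: leq_sum => I; rewrite inE => /eqP Ii.
rewrite -big_mkcondr /= sum1_card.
rewrite -(card_in_imset (f := fun T => T :\: I)); last first.
  move=> T1 T2 /andP[_ IT1] /andP[_ IT2] /= E.
  by rewrite -(setID T1 I) -(setID T2 I) (setIidPr IT1) (setIidPr IT2) E.
apply: subset_leq_card; apply/subsetP => _ /imsetP[T /andP[cT IT] ->].
by rewrite /K inE in cT; rewrite inE -Ii link_clique ?Ii.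
Qed.

Lemma kt_le_link_average (R : realFieldType) (V : finType) s t i (H : {set {set V}}) (b : R) :
  (i <= s)%N -> (i <= t)%N ->
  (forall I : {set V}, #|I| = i -> ((kt (s - i) (t - i) (link H I))%:R <= b)%R) ->
  ((kt s t H)%:R <= 'C(#|V|, i)%:R * (b / 'C(t, i)%:R))%R.
Proof.
move=> iS it linkb; have Ct : (0 < 'C(t, i)%:R :> R)%R by rewrite ltr0n bin_gt0.
rewrite mulrA ler_pdivlMr // -natrM.
apply: le_trans (_ : \sum_(I in [set I : {set V} | #|I| == i])
                       (kt (s - i) (t - i) (link H I))%:R <= _)%R.
  by rewrite -natr_sum ler_nat kt_mul_bin_le_sum_link.
rewrite -card_draws mulr_natl -sumr_const; apply: ler_sum => I.
by rewrite inE => /eqP; apply: linkb.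
Qed.

Lemma cascade_sum_pad (ns : seq nat) (e : nat -> nat) q : size ns <= q ->
  (forall k, k < q -> 0 < e k) ->
  \sum_(k < size ns) 'C(nth 0 ns k, e k) = \sum_(k < q) 'C(nth 0 ns k, e k).
Proof.
move=> nsq e0; rewrite (big_ord_widen _ (fun k => 'C(nth 0 ns k, e k)) nsq) big_mkcond /=.
apply: eq_bigr => k _; case: ltnP => // nsk.
by rewrite nth_default // bin0n; case: (e k) (e0 k (ltn_ord k)).
Qed.

Section CodegreeBounds.
Local Open Scope ring_scope.
Variables (R : realType) (V : finType) (i s t : nat) (H : {set {set V}}).
Hypotheses (iS : (i < s)%N) (st : (s <= t)%N) (sH : is_sgraph s H).

Let iS' : (i <= s)%N := ltnW iS.
Let it : (i <= t)%N := leq_trans iS' st.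

Lemma sgraph_on_link_card (I : {set V}) : #|I| = i -> sgraph_on (s - i) (~: I) (link H I).
Proof. by move=> <-; rewrite -setTD; apply/sgraph_on_link/sgraph_on_setT. Qed.

Lemma kt_le_codeg_cascade Delta ns : cascade_rep (s - i) Delta ns ->
  (forall I : {set V}, #|I| = i -> (codeg H I <= Delta)%N) ->
  (kt s t H)%:R <=
    'C(#|V|, i)%:R * ((\sum_(k < size ns) 'C(nth 0 ns k, t - i - k)%:R) / 'C(t, i)%:R) :> R.
Proof.
move=> [[nsq _ _] ->] codH; apply: kt_le_link_average => // I Ii.
rewrite -natr_sum ler_nat (cascade_sum_pad (e := fun k => (t - i - k)%N) nsq); last lia.
apply: kt_le_cascade (sgraph_on_link_card Ii) _; first lia.
by rewrite card_link -(cascade_sum_pad (e := fun k => (s - i - k)%N) nsq) ?codH //; lia.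
Qed.

Section Lovasz.
Variable x : R.
Hypotheses (sx : s%:R <= x)
  (codH : forall I : {set V}, #|I| = i -> (codeg H I)%:R <= binr (x - i%:R) (s - i)).

Let card_link_le (I : {set V}) : #|I| = i -> #|link H I|%:R <= binr (x - i%:R) (s - i).
Proof. by move=> Ii; rewrite card_link codH. Qed.

Let pred_sub_le n : (i < n)%N -> n%:R <= x -> ((n - i).-1)%:R <= x - i%:R.
Proof. by move=> ni nx; rewrite -subn1 -subnDA natrB ?natrD ?addn1 //; lra. Qed.

Lemma kt_eq0_codeg_binr : x < t%:R -> kt s t H = 0%N.
Proof.
move=> xt; suff : (kt s t H)%:R <= 'C(#|V|, i)%:R * (0 / 'C(t, i)%:R) :> R.
  by rewrite mul0r mulr0 lern0 => /eqP.
apply: kt_le_link_average => // I Ii; rewrite kt_eq0 // -(ltr_nat R).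
rewrite (le_lt_trans (card_link_le Ii)) // binr_lt_bin ?subn_gt0 ?pred_sub_le //.
by rewrite natrB //; lra.
Qed.

Lemma kt_le_codeg_binr : t%:R <= x ->
  (kt s t H)%:R <= 'C(#|V|, i)%:R * (binr (x - i%:R) (t - i) / 'C(t, i)%:R).
Proof.
move=> tx; apply: kt_le_link_average => // I Ii.
by apply: kt_le_binr (sgraph_on_link_card Ii) _ (card_link_le Ii); rewrite ?pred_sub_le //; lia.
Qed.

End Lovasz.
End CodegreeBounds.

Unset Implicit Arguments.

Theorem mainTheorem4 (R : realType) (V : finType) (i s t : nat)
    (H : {set {set V}}) :
  (1 <= i)%N -> (i < s)%N -> (s <= t)%N -> is_sgraph s H ->
  (* (a) *)
  (forall (Delta : nat) (ns : seq nat),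
     cascade_rep (s - i) Delta ns ->
     (forall I : {set V}, #|I| = i -> (codeg H I <= Delta)%N) ->
     ((kt s t H)%:R : R) <=
       'C(#|V|, i)%:R * (1 / 'C(t, i)%:R) *
       \sum_(k < size ns) ('C(nth 0 ns k, t - i - k))%:R)%R /\
  (* (b) *)
  (forall x : R, (s%:R <= x)%R ->
     (forall I : {set V}, #|I| = i -> ((codeg H I)%:R <= binr (x - i%:R) (s - i))%R) ->
     ((x < t%:R)%R -> kt s t H = 0%N) /\
     ((t%:R <= x)%R ->
        ((kt s t H)%:R <= 'C(#|V|, i)%:R * (binr (x - i%:R) (t - i) / 'C(t, i)%:R))%R /\
        ('C(#|V|, i)%:R * (binr (x - i%:R) (t - i) / 'C(t, i)%:R) =
         'C(#|V|, i)%:R * (binr x t / binr x i) :> R)%R)).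
Proof.
move=> _ iS st sH; split=> [Delta ns cas codH | x sx codH].
  rewrite mul1r -mulrA [X in (_ * X)%R]mulrC.
  exact: kt_le_codeg_cascade cas codH.
split=> [xt|tx]; first exact: (kt_eq0_codeg_binr iS st sx codH xt).
split; first exact: kt_le_codeg_binr.
rewrite binr_ratio ?lt0r_neq0 ?ffactr_gt0 ?(ltnW (leq_trans iS st)) //.
by apply: lt_le_trans sx; rewrite ltr_nat; lia.
Qed.
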